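(* Let $N_1,N_2,N_3$ be negators such that $G=\operatorname{NNN}(N_1,N_2,N_3)$ is a bicritical snark. Then each of $N_1,N_2,N_3$ is a bicritical negator.
   Context: A multipole consists of vertices and edges; each edge has two ends, each either at a vertex or free (a semiedge); all multipoles are cubic. A colouring of a multipole (or graph) is an assignment of three colours to edges such that the three edge ends at each vertex get distinct colours. A snark is a connected cubic graph with no colouring. For distinct vertices $x,y$ of a graph $G$, $G-\{x,y\}$ denotes the multipole obtained by deleting $x$ and $y$ (edges formerly joining them to other vertices become dangling edges; an edge $xy$, if present, is kept as an isolated edge). A snark $G$ is bicritical if $G-\{x,y\}$ is colourable for every two distinct vertices $x,y$. Negator: for a snark $H$ and a path $uwv$ in $H$, $\operatorname{Neg}(H;u,v)$ is the $(2,2,1)$-pole $N(I,O,r)$ obtained by deleting $u,w,v$, with $I$ the two semiedges formerly at $u$, $O$ the two formerly at $v$, $r$ the one formerly at $w$. A negator $N=\operatorname{Neg}(H;u,v)$ is bicritical if $H-\{x,y\}$ is colourable for every two distinct vertices $x,y\in V(N)$. For negators $N_j(I_j,O_j,r_j)$, $j=1,2,3$, the cubic graph $\operatorname{NNN}(N_1,N_2,N_3)$ is obtained by performing the junctions (identifying free ends in pairs along arbitrary bijections) of $O_1$ with $I_2$, $O_2$ with $I_3$, $O_3$ with $I_1$, and adding one new vertex incident with the three residual semiedges $r_1,r_2,r_3$. *)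

(* Cubic (multi)graphs are encoded by their edge ends
   ("darts"): a vertex x of a cubic graph on the finite vertex type V owns
   the three ends (x,0), (x,1), (x,2); the edge structure is a pairing
   p : V * 'I_3 -> V * 'I_3 sending each end to the other end of its edge
   (a fixed-point-free involution). Parallel edges and loops are allowed. *)
From mathcomp Require Import all_boot.

Set Implicit Arguments.
Unset Strict Implicit.
Unset Printing Implicit Defensive.

Section Graphs.
Variable V : finType.
Implicit Type p : V * 'I_3 -> V * 'I_3.

Definition is_cubic p := involutive p /\ (forall d, p d != d).

Definition adj p : rel V := fun x y => [exists i, exists j, p (x, i) == (y, j)].

Definition connected p := forall x y : V, connect (adj p) x y.

(* The multipole G - S obtained from the cubic graph (V,p) by deleting the
   vertices of S: the ends formerly at deleted vertices become free ends
   (so edges to deleted vertices become dangling edges and edges between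
   deleted vertices become isolated edges). *)
Definition is_colouring_without p (S : {set V}) (c : V * 'I_3 -> 'I_3) :=
  (forall d, c (p d) = c d) /\
  (forall x, x \notin S -> injective (fun i : 'I_3 => c (x, i))).

Definition colourable_without p (S : {set V}) :=
  exists c, is_colouring_without p S c.

Definition colourable p := colourable_without p set0.

Definition snark p := [/\ is_cubic p, connected p & ~ colourable p].

Definition bicritical p :=
  snark p /\ forall x y : V, x != y -> colourable_without p [set x; y].
End Graphs.

(* Data of a negator Neg(H;u,v): the graph H together with the path u w v. *)
Record negator := Negator {
  nV : finType;
  np : nV * 'I_3 -> nV * 'I_3;
  nu : nV; nw : nV; nv : nV }.
Arguments np : clear implicits.
Arguments nu : clear implicits.
Arguments nw : clear implicits.
Arguments nv : clear implicits.

Definition in_neg (N : negator) (x : nV N) := x \notin [:: nu N; nw N; nv N].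

Definition surv (N : negator) : finType := {x : nV N | in_neg x}.

(* the semiedges of the negator formerly at a (a = u gives I, a = v gives O,
   a = w gives r): ends at vertices of N whose partner end was at a. *)
Definition semiedges_at (N : negator) (a : nV N) : {set nV N * 'I_3} :=
  [set d | in_neg d.1 && ((np N d).1 == a)].

Definition is_negator (N : negator) :=
  snark (np N) /\
  [/\ uniq [:: nu N; nw N; nv N], adj (np N) (nu N) (nw N) & adj (np N) (nw N) (nv N)] /\
  [/\ #|semiedges_at (nu N)| = 2, #|semiedges_at (nv N)| = 2
    & #|semiedges_at (nw N)| = 1].

Definition bicritical_negator (N : negator) :=
  forall x y : nV N, in_neg x -> in_neg y -> x != y ->
    colourable_without (np N) [set x; y].

Definition nnnV (N1 N2 N3 : negator) : finType :=
  (surv N1 + surv N2 + surv N3 + unit)%type.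

Definition inj1 {N1 N2 N3 : negator} (s : surv N1) : nnnV N1 N2 N3 := inl (inl (inl s)).
Definition inj2 {N1 N2 N3 : negator} (s : surv N2) : nnnV N1 N2 N3 := inl (inl (inr s)).
Definition inj3 {N1 N2 N3 : negator} (s : surv N3) : nnnV N1 N2 N3 := inl (inr s).
Definition znew {N1 N2 N3 : negator} : nnnV N1 N2 N3 := inr tt.

(* Edges of the NNN graph issuing from the negator N (with predecessor Np and
   successor Nn in the cyclic order): edges inside N are kept; the O-semiedges
   of N are joined with I-semiedges of Nn, the I-semiedges of N with
   O-semiedges of Np, and the r-semiedge of N goes to the new vertex z. *)
Definition NNN_side (N Np Nn : negator) (GV : finType)
  (pG : GV * 'I_3 -> GV * 'I_3)
  (inj : surv N -> GV) (injp : surv Np -> GV) (injn : surv Nn -> GV) (z : GV) :=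
  forall (s : surv N) (i : 'I_3),
    let e := np N (val s, i) in
    [/\ forall t : surv N, val t = e.1 -> pG (inj s, i) = (inj t, e.2),
        e.1 = nv N -> exists t j, (np Nn (val t, j)).1 = nu Nn /\ pG (inj s, i) = (injn t, j),
        e.1 = nu N -> exists t j, (np Np (val t, j)).1 = nv Np /\ pG (inj s, i) = (injp t, j)
      & e.1 = nw N -> exists k, pG (inj s, i) = (z, k)].

(* pG is the edge structure of NNN(N1,N2,N3) for some choice of the
   bijections used in the junctions (and some labelling of the ends at z). *)
Definition is_NNN (N1 N2 N3 : negator)
  (pG : nnnV N1 N2 N3 * 'I_3 -> nnnV N1 N2 N3 * 'I_3) :=
  [/\ is_cubic pG,
      NNN_side pG inj1 inj3 inj2 znew,
      NNN_side pG inj2 inj1 inj3 znew,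
      NNN_side pG inj3 inj2 inj1 znew
    & forall k : 'I_3,
        [\/ exists s i, (np N1 (val s, i)).1 = nw N1 /\ pG (znew, k) = (inj1 s, i),
            exists s i, (np N2 (val s, i)).1 = nw N2 /\ pG (znew, k) = (inj2 s, i)
          | exists s i, (np N3 (val s, i)).1 = nw N3 /\ pG (znew, k) = (inj3 s, i)]].

From mathcomp Require Import all_boot.

Set Implicit Arguments.
Unset Strict Implicit.
Unset Printing Implicit Defensive.

(* Let c colour G - {x, y} with x, y in N1. Its restrictions to N2 and N3 are
   colourings of the whole negators, so by the Parity Lemma each colour occurs an
   odd number of times on their five semiedges; as H2 and H3 are uncolourable,
   exactly one of the pairs I, O of each of them is monochromatic.  Following the
   junctions O1 = I2, O2 = I3, O3 = I1, and using that r1, r2, r3 meet at the new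
   vertex with distinct colours, the five semiedges of N1 satisfy the same parity
   condition, and I1, O1 are either both monochromatic or both not; parity rules
   out the former.  Such boundary colours always extend over the path u w v, which
   colours H1 - {x, y}. *)

Local Notation ord1 := (Ordinal (isT : 1 < 3)).

Lemma ord3P (a : 'I_3) : [\/ a = ord0, a = ord1 | a = ord_max].
Proof.
by case: a => [[|[|[|m]]] lt_a3] //; [apply: Or31 | apply: Or32 | apply: Or33]; apply: val_inj.
Qed.

Ltac case_colour a := case: (ord3P a) => ->.

Lemma ord3_inj (f : 'I_3 -> 'I_3) (t1 t2 t3 : 'I_3) :
  uniq [:: f t1; f t2; f t3] -> injective f.
Proof.
move=> uniq_f.
have /image_injP f_inj : #|image f 'I_3| == #|'I_3|.
  rewrite eqn_leq leq_image_card /=.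
  have <- : #|[:: f t1; f t2; f t3]| = #|'I_3| by rewrite card_ord (card_uniqP uniq_f).
  by apply/subset_leq_card/subsetP => y; rewrite !inE => /or3P[] /eqP ->; apply: image_f.
by move=> x y; apply: f_inj.
Qed.

Lemma uniq_ord3_xor (r1 r2 r3 k : 'I_3) :
  uniq [:: r1; r2; r3] -> (r1 == k) (+) (r2 == k) (+) (r3 == k).
Proof. by case_colour r1; case_colour r2; case_colour r3; case_colour k. Qed.

Lemma perm_pair_eq (T : eqType) (a b c d : T) :
  perm_eq [:: a; b] [:: c; d] -> (a == b) = (c == d).
Proof.
have pair_eq x y x' y' : perm_eq [:: x; y] [:: x'; y'] -> x = y -> x' = y'.
  move=> /perm_mem mem_xy exy; subst y.
  by move: (mem_xy x') (mem_xy y'); rewrite !inE !eqxx orbT !orbb => /eqP -> /eqP ->.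
by move=> pe; apply/eqP/eqP; apply: pair_eq; rewrite // perm_sym.
Qed.

Lemma even_card_fixfree_involution (T : finType) (f : T -> T) (D : {set T}) :
  involutive f -> (forall x, f x != x) -> (forall x, x \in D -> f x \in D) ->
  ~~ odd #|D|.
Proof.
move=> fK f_fix f_D.
(* f swaps the elements of D below their partner in enum_rank order with those above it *)
pose r (x : T) : nat := enum_rank x.
have r_f x : r x != r (f x).
  by apply/eqP => /val_inj/enum_rank_inj exf; move: (f_fix x); rewrite -exf eqxx.
set B := [set x | r x < r (f x)].
have DB : D :\: B = f @: (D :&: B).
  apply/setP => x; rewrite !inE; apply/idP/imsetP.
  - case/andP=> xNB xD; exists (f x); last by rewrite fK.
    by rewrite !inE f_D // fK ltn_neqAle eq_sym r_f leqNgt xNB.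
  - by case=> y; rewrite !inE => /andP[yB yD] ->; rewrite f_D // fK -leqNgt ltnW.
by rewrite -(cardsID B D) DB card_imset ?oddD ?addbb //; exact: inv_inj.
Qed.

Definition colour_balanced (s : seq 'I_3) :=
  forall k l : 'I_3, odd (count_mem k s) = odd (count_mem l s).

Lemma colour_balanced_not_two_pairs (a b c d e : 'I_3) :
  colour_balanced [:: a; b; c; d; e] -> ~~ ((a == b) && (c == d)).
Proof.
move=> bal; move: (bal ord0 ord1) (bal ord1 ord_max).
by case_colour a; case_colour b; case_colour c; case_colour d; case_colour e.
Qed.

Lemma colour_balanced_extension (a b c d e : 'I_3) :
  colour_balanced [:: a; b; c; d; e] -> a != b -> c != d ->
  exists al be, [/\ uniq [:: a; b; al], uniq [:: c; d; be] & uniq [:: e; al; be]].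
Proof.
move=> bal; move: (bal ord0 ord1) (bal ord1 ord_max).
case_colour a; case_colour b; case_colour c; case_colour d; case_colour e => //= _ _ _ _;
  solve [(exists ord0 + exists ord1 + exists ord_max);
         (exists ord0 + exists ord1 + exists ord_max); split; reflexivity].
Qed.

Lemma colour_balanced_cycle (IA OA IB OB IC OC : seq 'I_3) (rA rB rC : 'I_3) :
  perm_eq OA IB -> perm_eq OB IC -> perm_eq OC IA -> uniq [:: rA; rB; rC] ->
  colour_balanced (IB ++ OB ++ [:: rB]) -> colour_balanced (IC ++ OC ++ [:: rC]) ->
  colour_balanced (IA ++ OA ++ [:: rA]).
Proof.
move=> /permP eAB /permP eBC /permP eCA uniq_r balB balC.
(* In the sum of the three counts the junction terms cancel in pairs, and the
   distinct rA, rB, rC contribute exactly one. *)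
have oddA k : odd (count_mem k (IA ++ OA ++ [:: rA])) =
    ~~ (odd (count_mem k (IB ++ OB ++ [:: rB])) (+) odd (count_mem k (IC ++ OC ++ [:: rC]))).
  rewrite !count_cat /= eAB eBC eCA !addn0 !oddD !oddb.
  move: (uniq_ord3_xor k uniq_r)
    (odd (count_mem k IA)) (odd (count_mem k IB)) (odd (count_mem k IC)).
  by case: (rA == k); case: (rB == k); case: (rC == k) => //= _; do 3!case.
by move=> k l; rewrite (oddA k) (oddA l) (balB k l) (balC k l).
Qed.

Lemma boundary_colour_parity (V : finType) (p : V * 'I_3 -> V * 'I_3)
    (col : V * 'I_3 -> 'I_3) (A : {set V}) (L : seq (V * 'I_3)) :
  is_cubic p ->
  (forall d, d.1 \in A -> (p d).1 \in A -> col (p d) = col d) ->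
  (forall x, x \in A -> injective (fun i => col (x, i))) ->
  uniq L -> (forall d, (d \in L) = (d.1 \in A) && ((p d).1 \notin A)) ->
  forall k, odd (count_mem k (map col L)) = odd #|A|.
Proof.
move=> [pK p_fix] col_p col_inj uniq_L memL k.
set Dk := [set d | (d.1 \in A) && (col d == k)].
set Inner := [set d | (p d).1 \in A].
have card_Dk : #|Dk| = #|A|.
  have -> : A = fst @: Dk.
    apply/setP => x; apply/idP/imsetP => [xA | [d]]; last by rewrite inE => /andP[dA _] ->.
    have /codomP[i eik] : k \in codom (fun i => col (x, i)) by apply/injF_onto/col_inj.
    by exists (x, i); rewrite // inE xA eik eqxx.
  apply/esym/card_in_imset => -[x i] [y j].
  rewrite !inE /= => /andP[xA /eqP <-] /andP[_ /eqP eij] exy.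
  by subst y; rewrite (col_inj x xA i j (esym eij)).
have even_inner : ~~ odd #|Dk :&: Inner|.
  apply: (even_card_fixfree_involution pK p_fix) => d.
  by rewrite !inE pK => /andP[/andP[dA /eqP <-] pdA]; rewrite pdA dA col_p ?eqxx.
have outer : #|Dk :\: Inner| = count_mem k (map col L).
  rewrite count_map -size_filter.
  move/card_uniqP: (filter_uniq (preim col (pred1 k)) uniq_L) => <-.
  apply: eq_card => d; rewrite !inE mem_filter memL /=.
  by case: (col d == k); case: (d.1 \in A); case: ((p d).1 \in A).
by rewrite -card_Dk -(cardsID Inner Dk) oddD (negbTE even_inner) outer.
Qed.

Definition negator_terminals (N : negator) (i1 i2 o1 o2 r : nV N * 'I_3) :=
  [/\ semiedges_at (nu N) = [set i1; i2], i1 != i2,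
      semiedges_at (nv N) = [set o1; o2], o1 != o2
    & semiedges_at (nw N) = [set r]].

Lemma negator_terminals_exist (N : negator) :
  is_negator N -> exists i1 i2 o1 o2 r : nV N * 'I_3, negator_terminals i1 i2 o1 o2 r.
Proof.
case=> _ [_ [/eqP/cards2P[i1 [i2 [ne_i eI]]] /eqP/cards2P[o1 [o2 [ne_o eO]]] /eqP/cards1P[r eR]]].
by exists i1, i2, o1, o2, r.
Qed.

(* A colouring of the multipole N - S, recorded on the edge ends of H; the
   colours of the ends at u, w, v are irrelevant. *)
Definition negator_colouring (N : negator) (S : {set nV N}) (col : nV N * 'I_3 -> 'I_3) :=
  (forall d, in_neg d.1 -> in_neg (np N d).1 -> col (np N d) = col d) /\
  (forall x, in_neg x -> x \notin S -> injective (fun i => col (x, i))).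

Lemma semiedges_at_disjoint (N : negator) (a b : nV N) d d' :
  a != b -> d \in semiedges_at a -> d' \in semiedges_at b -> d != d'.
Proof.
rewrite !inE => ab /andP[_ /eqP ea] /andP[_ /eqP eb].
by apply: contraNneq ab => edd; rewrite -ea -eb edd.
Qed.

Section Negator.
Variables (N : negator) (i1 i2 o1 o2 r : nV N * 'I_3).
Hypotheses (negN : is_negator N) (termN : negator_terminals i1 i2 o1 o2 r).
Local Notation p := (np N).
Local Notation u := (nu N).
Local Notation w := (nw N).
Local Notation v := (nv N).

Lemma negator_colouring_extend S col al be :
  negator_colouring S col ->
  uniq [:: col i1; col i2; al] -> uniq [:: col o1; col o2; be] -> uniq [:: col r; al; be] ->
  colourable_without p S.
Proof.
move=> [col_p col_inj] uniq_u uniq_v uniq_w.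
have [[[pK _] _ _] [[uniq_uwv adj_uw adj_wv] _]] := negN.
have [eI _ eO _ eR] := termN.
have [wu vu] : w != u /\ v != u.
  by move: uniq_uwv; rewrite /= !inE !negb_or ![u == _]eq_sym => /andP[/andP[-> ->]].
have [out_u out_w out_v] : [/\ ~~ in_neg u, ~~ in_neg w & ~~ in_neg v].
  by rewrite /in_neg !negbK !inE !eqxx !orbT.
case/existsP: adj_uw => iu /existsP[j /eqP e_uw].
case/existsP: adj_wv => j' /existsP[k /eqP e_wv].
have e_wu : p (w, j) = (u, iu) by rewrite -e_uw pK.
have e_vw : p (v, k) = (w, j') by rewrite -e_wv pK.
pose c' d := if in_neg d.1 then col d else if in_neg (p d).1 then col (p d)
             else if (d.1 == u) || ((p d).1 == u) then al else be.
have c'_term a d : ~~ in_neg a -> d \in semiedges_at a -> c' (a, (p d).2) = col d.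
  move=> out_a; rewrite inE => /andP[d_in /eqP ea].
  by rewrite -ea -surjective_pairing /c' ea (negbTE out_a) pK d_in.
have c'_uw : c' (u, iu) = al by rewrite /c' /= (negbTE out_u) e_uw /= (negbTE out_w) eqxx.
have c'_wu : c' (w, j) = al by rewrite /c' /= (negbTE out_w) e_wu /= (negbTE out_u) eqxx orbT.
have c'_wv : c' (w, j') = be.
  by rewrite /c' /= (negbTE out_w) e_wv /= (negbTE out_v) (negbTE wu) (negbTE vu).
have c'_vw : c' (v, k) = be.
  by rewrite /c' /= (negbTE out_v) e_vw /= (negbTE out_w) (negbTE wu) (negbTE vu).
exists c'; split.
  move=> d; rewrite /c' pK.
  case: (boolP (in_neg d.1)) => d_in; case: (boolP (in_neg (p d).1)) => pd_in //.
    by rewrite col_p.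
  by rewrite orbC.
move=> x x_out; case: (boolP (in_neg x)) => [x_in | ].
  by move=> i i' /=; rewrite /c' /= x_in; exact: col_inj.
rewrite /in_neg negbK !inE => /or3P[] /eqP ->.
- apply: (@ord3_inj _ (p i1).2 (p i2).2 iu).
  by rewrite /= !c'_term ?c'_uw // eI !inE eqxx ?orbT.
- apply: (@ord3_inj _ (p r).2 j j').
  by rewrite /= c'_term ?c'_wu ?c'_wv // eR set11.
- apply: (@ord3_inj _ (p o1).2 (p o2).2 k).
  by rewrite /= !c'_term ?c'_vw // eO !inE eqxx ?orbT.
Qed.

Lemma negator_colouring_balanced col :
  negator_colouring set0 col -> colour_balanced [:: col i1; col i2; col o1; col o2; col r].
Proof.
move=> [col_p col_inj].
have [[cubic _ _] [[uniq_uwv _ _] _]] := negN.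
have [eI ne_i eO ne_o eR] := termN.
pose A := [set x : nV N | in_neg x].
have boundaryE d : (d \in [:: i1; i2; o1; o2; r]) = (d.1 \in A) && ((p d).1 \notin A).
  have -> : (d \in [:: i1; i2; o1; o2; r]) =
      [|| d \in semiedges_at u, d \in semiedges_at v | d \in semiedges_at w].
    by rewrite eI eO eR !inE !orbA.
  rewrite !inE -!andb_orr /in_neg negbK !inE.
  by case: ((p d).1 == v); case: ((p d).1 == w); rewrite /= ?orbT ?orbF.
have uniq_L : uniq [:: i1; i2; o1; o2; r].
  have [uw uv wv] : [/\ u != w, u != v & w != v].
    by move: uniq_uwv; rewrite /= !inE !negb_or => /andP[/andP[-> ->] /andP[-> _]].
  have [hi1 hi2 ho1 ho2 hr] : [/\ i1 \in semiedges_at u, i2 \in semiedges_at u,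
      o1 \in semiedges_at v, o2 \in semiedges_at v & r \in semiedges_at w].
    by rewrite eI eO eR !inE !eqxx !orbT.
  have vw : v != w by rewrite eq_sym.
  rewrite /= !inE !negb_or ne_i ne_o.
  rewrite (semiedges_at_disjoint uw hi1 hr) (semiedges_at_disjoint uw hi2 hr).
  rewrite (semiedges_at_disjoint vw ho1 hr) (semiedges_at_disjoint vw ho2 hr).
  by rewrite !(semiedges_at_disjoint uv hi1) ?(semiedges_at_disjoint uv hi2).
have col_pA d : d.1 \in A -> (p d).1 \in A -> col (p d) = col d by rewrite !inE; exact: col_p.
have col_injA x : x \in A -> injective (fun i => col (x, i)).
  by rewrite inE => x_in; apply: col_inj; rewrite ?inE.
have parity := boundary_colour_parity cubic col_pA col_injA uniq_L boundaryE.
by move=> k l; exact: etrans (parity k) (esym (parity l)).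
Qed.

Lemma negator_negates col :
  negator_colouring set0 col -> (col i1 == col i2) (+) (col o1 == col o2).
Proof.
move=> colN; have bal := negator_colouring_balanced colN.
have := colour_balanced_not_two_pairs bal.
case: eqP => [_ | /eqP ne_i]; case: eqP => [_ | /eqP ne_o] // _.
have [al [be [uniq_u uniq_v uniq_w]]] := colour_balanced_extension bal ne_i ne_o.
have [[_ _ not_colourable] _] := negN.
by case: not_colourable; apply: negator_colouring_extend colN uniq_u uniq_v uniq_w.
Qed.

End Negator.

(* c read on the ends of H through the embedding inj; ends at u, w, v get the
   junk colour ord0. *)
Definition restrict_col (N : negator) (GV : finType) (inj : surv N -> GV)
    (c : GV * 'I_3 -> 'I_3) (d : nV N * 'I_3) : 'I_3 :=
  if insub d.1 is Some s then c (inj s, d.2) else ord0.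

Lemma restrict_colE (N : negator) (GV : finType) (inj : surv N -> GV) c x i (x_in : in_neg x) :
  restrict_col inj c (x, i) = c (inj (exist _ x x_in), i).
Proof. by rewrite /restrict_col /= insubT. Qed.

Section Restriction.
Variables (N Np Nn : negator) (GV : finType) (pG : GV * 'I_3 -> GV * 'I_3).
Variables (inj : surv N -> GV) (injp : surv Np -> GV) (injn : surv Nn -> GV) (z : GV).
Variables (S : {set GV}) (c : GV * 'I_3 -> 'I_3).
Hypotheses (sideN : NNN_side pG inj injp injn z) (colG : is_colouring_without pG S c).

Lemma restrict_col_colouring (S' : {set nV N}) :
  (forall s : surv N, val s \notin S' -> inj s \notin S) ->
  negator_colouring S' (restrict_col inj c).
Proof.
move=> notS; have [col_pG col_inj] := colG; split.
  move=> [x i] /= x_in.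
  have [keep _ _ _] := sideN (exist _ x x_in) i.
  case e: (np N (x, i)) keep => [y j] /= keep y_in.
  rewrite (restrict_colE _ _ _ y_in) (restrict_colE _ _ _ x_in).
  by rewrite -[RHS]col_pG (keep (exist _ y y_in)).
move=> x x_in x_out i j /=; rewrite !(restrict_colE _ _ _ x_in).
exact/col_inj/notS.
Qed.

Lemma restrict_col_out_end o : o \in semiedges_at (nv N) ->
  exists s t j, [/\ val s = o.1, (val t, j) \in semiedges_at (nu Nn),
    pG (inj s, o.2) = (injn t, j) & restrict_col inj c o = restrict_col injn c (val t, j)].
Proof.
case: o => x i; rewrite inE /= => /andP[x_in /eqP e_v].
have [_ to_next _ _] := sideN (exist _ x x_in) i.
have [[y y_in] [j [e_u e]]] := to_next e_v.
exists (exist _ x x_in), (exist _ y y_in), j; split => //.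
  by rewrite inE y_in e_u eqxx.
by rewrite (restrict_colE _ _ _ x_in) (restrict_colE _ _ _ y_in) -e (proj1 colG).
Qed.

Lemma restrict_col_junction iN1 iN2 o1 o2 rN i1 i2 oN1 oN2 rNn :
  injective pG -> injective inj ->
  negator_terminals iN1 iN2 o1 o2 rN -> negator_terminals i1 i2 oN1 oN2 rNn ->
  perm_eq [:: restrict_col inj c o1; restrict_col inj c o2]
          [:: restrict_col injn c i1; restrict_col injn c i2].
Proof.
move=> pG_inj inj_inj [_ _ eO ne_o _] [eI _ _ _ _].
have [o1_in o2_in] : o1 \in semiedges_at (nv N) /\ o2 \in semiedges_at (nv N).
  by rewrite eO !inE !eqxx orbT.
have [s1 [t1 [j1 [vs1 t1_in e1 ->]]]] := restrict_col_out_end o1_in.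
have [s2 [t2 [j2 [vs2 t2_in e2 ->]]]] := restrict_col_out_end o2_in.
have ne_t : (val t1, j1) != (val t2, j2).
  apply: contraNneq ne_o => -[/val_inj et ej]; subst t2 j2.
  move: e1; rewrite -e2 => /pG_inj[/inj_inj es ei]; subst s2.
  by rewrite [o1]surjective_pairing [o2]surjective_pairing -vs1 -vs2 ei.
move: t1_in t2_in ne_t; rewrite eI !inE => /orP[] /eqP -> /orP[] /eqP ->; rewrite ?eqxx // => _.
all: by apply/permP => P /=; rewrite // addnCA.
Qed.

Lemma restrict_col_r i1 i2 o1 o2 r :
  negator_terminals i1 i2 o1 o2 r ->
  exists s k, pG (inj s, r.2) = (z, k) /\ c (z, k) = restrict_col inj c r.
Proof.
case=> _ _ _ _; move: r => [x i] eR.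
have : (x, i) \in semiedges_at (nw N) by rewrite eR set11.
rewrite inE /= => /andP[x_in /eqP e_w].
have [_ _ _ to_z] := sideN (exist _ x x_in) i.
have [k e] := to_z e_w.
exists (exist _ x x_in), k; split => //.
by rewrite (restrict_colE _ _ _ x_in) -e (proj1 colG).
Qed.

End Restriction.

Section NNN.
Variables (A B C : negator) (GV : finType) (pG : GV * 'I_3 -> GV * 'I_3).
Variables (injA : surv A -> GV) (injB : surv B -> GV) (injC : surv C -> GV) (z : GV).
Hypotheses (negA : is_negator A) (negB : is_negator B) (negC : is_negator C).
Hypotheses (cubicG : is_cubic pG) (sideA : NNN_side pG injA injC injB z)
  (sideB : NNN_side pG injB injA injC z) (sideC : NNN_side pG injC injB injA z).
Hypotheses (injA_inj : injective injA) (injB_inj : injective injB) (injC_inj : injective injC).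
Hypotheses (injAB : forall a b, injA a != injB b) (injAC : forall a c, injA a != injC c)
  (injBC : forall b c, injB b != injC c) (injAz : forall a, injA a != z).

Lemma NNN_r_colours_uniq S c iA1 iA2 oA1 oA2 rA iB1 iB2 oB1 oB2 rB iC1 iC2 oC1 oC2 rC :
  is_colouring_without pG S c -> z \notin S ->
  negator_terminals iA1 iA2 oA1 oA2 rA -> negator_terminals iB1 iB2 oB1 oB2 rB ->
  negator_terminals iC1 iC2 oC1 oC2 rC ->
  uniq [:: restrict_col injA c rA; restrict_col injB c rB; restrict_col injC c rC].
Proof.
move=> colG notz tA tB tC.
have [sA [kA [eA <-]]] := restrict_col_r sideA colG tA.
have [sB [kB [eB <-]]] := restrict_col_r sideB colG tB.
have [sC [kC [eC <-]]] := restrict_col_r sideC colG tC.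
have z_ends d d' k k' :
    pG d = (z, k) -> pG d' = (z, k') -> d.1 != d'.1 -> c (z, k) != c (z, k').
  move=> e e'; apply: contraNneq => /(proj2 colG z notz) ekk.
  by have -> : d = d' by apply: (inv_inj cubicG.1); rewrite e e' ekk.
rewrite /= !inE !negb_or (z_ends _ _ _ _ eA eB (injAB _ _)).
by rewrite (z_ends _ _ _ _ eA eC (injAC _ _)) (z_ends _ _ _ _ eB eC (injBC _ _)).
Qed.

Lemma NNN_terminal_colours S c iA1 iA2 oA1 oA2 rA :
  is_colouring_without pG S c ->
  (forall b, injB b \notin S) -> (forall c', injC c' \notin S) -> z \notin S ->
  negator_terminals iA1 iA2 oA1 oA2 rA ->
  [/\ colour_balanced [:: restrict_col injA c iA1; restrict_col injA c iA2;
                          restrict_col injA c oA1; restrict_col injA c oA2; restrict_col injA c rA],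
      restrict_col injA c iA1 != restrict_col injA c iA2
    & restrict_col injA c oA1 != restrict_col injA c oA2].
Proof.
move=> colG notB notC notz tA.
have pG_inj : injective pG := inv_inj cubicG.1.
have [iB1 [iB2 [oB1 [oB2 [rB tB]]]]] := negator_terminals_exist negB.
have [iC1 [iC2 [oC1 [oC2 [rC tC]]]]] := negator_terminals_exist negC.
have colB := restrict_col_colouring sideB colG (S' := set0) (fun b _ => notB b).
have colC := restrict_col_colouring sideC colG (S' := set0) (fun c _ => notC c).
have jAB := restrict_col_junction sideA colG pG_inj injA_inj tA tB.
have jBC := restrict_col_junction sideB colG pG_inj injB_inj tB tC.
have jCA := restrict_col_junction sideC colG pG_inj injC_inj tC tA.
have uniq_r := NNN_r_colours_uniq colG notz tA tB tC.
have balA := colour_balanced_cycle jAB jBC jCA uniq_r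
  (negator_colouring_balanced negB tB colB) (negator_colouring_balanced negC tC colC).
(* B and C negate, so [O_A = I_B] is monochromatic iff [O_B = I_C] is not, iff
   [O_C = I_A] is; balancedness of A rules out both. *)
split => //; move: (colour_balanced_not_two_pairs balA)
  (negator_negates negB tB colB) (negator_negates negC tC colC).
all: rewrite -(perm_pair_eq jAB) (perm_pair_eq jBC) (perm_pair_eq jCA).
all: by case: (_ == _); case: (_ == _); case: (_ == _).
Qed.

Lemma NNN_bicritical_negator :
  (forall g h : GV, g != h -> colourable_without pG [set g; h]) -> bicritical_negator A.
Proof.
move=> bicG x y x_in y_in ne_xy.
pose sx : surv A := exist _ x x_in; pose sy : surv A := exist _ y y_in.
have [c colG] : colourable_without pG [set injA sx; injA sy].
  by apply: bicG; rewrite (inj_eq injA_inj) -val_eqE.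
have [iA1 [iA2 [oA1 [oA2 [rA tA]]]]] := negator_terminals_exist negA.
have [notB notC notz] : [/\ forall b, injB b \notin [set injA sx; injA sy],
    forall c', injC c' \notin [set injA sx; injA sy] & z \notin [set injA sx; injA sy]].
  by split=> [b | c' |]; rewrite !inE !negb_or ![_ == injA _]eq_sym ?injAB ?injAC ?injAz.
have [balA ne_i ne_o] := NNN_terminal_colours colG notB notC notz tA.
have colA : negator_colouring [set x; y] (restrict_col injA c).
  apply: (restrict_col_colouring sideA colG) => s.
  by rewrite !inE !(inj_eq injA_inj) -!val_eqE.
have [al [be [uniq_u uniq_v uniq_w]]] := colour_balanced_extension balA ne_i ne_o.
exact: (negator_colouring_extend negA tA colA uniq_u uniq_v uniq_w).
Qed.

End NNN.

Theorem proposition11 (N1 N2 N3 : negator)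
  (pG : nnnV N1 N2 N3 * 'I_3 -> nnnV N1 N2 N3 * 'I_3) :
  is_negator N1 -> is_negator N2 -> is_negator N3 ->
  is_NNN pG -> bicritical pG ->
  [/\ bicritical_negator N1, bicritical_negator N2 & bicritical_negator N3].
Proof.
move=> neg1 neg2 neg3 [cubicG side1 side2 side3 _] [_ bicG].
split; [apply: (NNN_bicritical_negator neg1 neg2 neg3 cubicG side1 side2 side3)
       | apply: (NNN_bicritical_negator neg2 neg3 neg1 cubicG side2 side3 side1)
       | apply: (NNN_bicritical_negator neg3 neg1 neg2 cubicG side3 side1 side2)] => //.
all: by move=> ? ? [].
Qed.
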